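(* Let $k\ge 1$ and let $L_i(m)=a_im+b_i$ ($i=1,\dots,k$) be an admissible $k$-tuple of linear forms. Suppose that for certain pairs $i\neq j$ there are relations $|c_{i,j}L_i-c_{j,i}L_j|=n_{i,j}$ with positive integers $c_{i,j},c_{j,i},n_{i,j}$. Let $r_1,\dots,r_k$ be positive integers such that $\gcd(r_i,a_i)=1$ for all $i$, and $\gcd(r_i,\det(L_i,L_j))=\gcd(r_i,r_j)=1$ whenever $i\neq j$. Then there is an admissible $k$-tuple of linear forms $K_1,\dots,K_k$ satisfying, for each of those pairs, the relations $|c_{i,j}r_iK_i-c_{j,i}r_jK_j|=n_{i,j}$.
   Context: A linear form is a polynomial $L(m)=am+b$ with $a,b\in\mathbb{Z}$ and $a>0$ (viewed both as a polynomial and as a function of $m$). For linear forms $L(m)=am+b$ and $K(m)=cm+d$, a relation between them is an identity of polynomials $|c_L L-c_K K|=n$ (i.e. $c_LL-c_KK$ is the constant polynomial $\pm n$) with $c_L,c_K,n$ positive integers; $c_L,c_K$ are the relation coefficients and $n$ the relation value. The determinant is $\det(L,K)=|ad-bc|$. For a prime $p$, a $k$-tuple $L_1,\dots,L_k$ is $p$-admissible if there is an integer $t_p$ with $L_1(t_p)\cdots L_k(t_p)\not\equiv 0 \pmod p$; it is admissible if it is $p$-admissible for every prime $p$. *)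

From HB Require Import structures.
From mathcomp Require Import all_boot all_order all_algebra.
Set Implicit Arguments. Unset Strict Implicit. Unset Printing Implicit Defensive.
Import Order.TTheory GRing.Theory Num.Theory.
Local Open Scope ring_scope.

Definition lf (a b : int) : {poly int} := a *: 'X + b%:P.

Definition lf_relation (cL cK n : int) (L K : {poly int}) : Prop :=
  [/\ 0 < cL, 0 < cK, 0 < n &
      (cL *: L - cK *: K = n%:P \/ cL *: L - cK *: K = (- n)%:P)].

Definition lf_det (a b c d : int) : int := `|a * d - b * c|.

Definition p_admissible (k p : nat) (a b : 'I_k -> int) : Prop :=
  exists t : int, ~~ (p%:Z %| \prod_(i < k) (lf (a i) (b i)).[t])%Z.

Definition admissible (k : nat) (a b : 'I_k -> int) : Prop :=
  forall p : nat, prime p -> p_admissible p a b.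

(* Choose t with r_i | L_i(t) for every i (Chinese remainders: gcd(r_i, a_i) = 1 and the r_i are
   pairwise coprime), put R = r_1 ... r_k and K_i(m) = L_i(R m + t) / r_i.  Then r_i K_i is the
   composite L_i o (R X + t), so every relation |c L_i - c' L_j| = n composes into
   |c r_i K_i - c' r_j K_j| = n.  Admissibility at a prime p not dividing R comes from that of the
   L_i, since m |-> R m + t is onto modulo p and R * prod K_i(m) = prod L_i(R m + t).  If p | r_i0,
   then p divides L_i0(R m + t) for every m, so it divides no other L_j(R m + t), as it would then
   divide det(L_i0, L_j); and K_i0 has leading coefficient prime to p, so K_i0(0) or K_i0(1) is
   prime to p. *)

From HB Require Import structures.
From mathcomp Require Import all_boot all_order all_algebra.
From mathcomp Require Import ring.
Set Implicit Arguments.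
Unset Strict Implicit.
Unset Printing Implicit Defensive.

Import Order.TTheory GRing.Theory Num.Theory.
Local Open Scope ring_scope.

Lemma lf_horner (a b x : int) : (lf a b).[x] = a * x + b.
Proof. by rewrite /lf !hornerE. Qed.

Lemma lf_relation_comp cL cK n (L K q : {poly int}) :
  lf_relation cL cK n L K -> lf_relation cL cK n (L \Po q) (K \Po q).
Proof.
case=> cL_gt0 cK_gt0 n_gt0 rel; split=> //.
by rewrite -!comp_polyZ -comp_polyB; case: rel => ->; rewrite comp_polyC; [left|right].
Qed.

Lemma lf_relation_unscale cL cK n (u v : int) (L K : {poly int}) :
  0 < u -> 0 < v -> lf_relation cL cK n (u *: L) (v *: K) ->
  lf_relation (cL * u) (cK * v) n L K.
Proof.
move=> u_gt0 v_gt0 [cL_gt0 cK_gt0 n_gt0 rel].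
by split; rewrite ?mulr_gt0 // -!scalerA.
Qed.

Lemma dvdz_lf_det (d a b c e s : int) :
  (d %| (lf a b).[s])%Z -> (d %| (lf c e).[s])%Z -> (d %| lf_det a b c e)%Z.
Proof.
rewrite /lf_det !lf_horner => dv_ab dv_ce.
suff : (d %| a * e - b * c)%Z by rewrite -abszE.
have -> : a * e - b * c = a * (c * s + e) - c * (a * s + b) by ring.
by rewrite rpredB ?dvdz_mull.
Qed.

Lemma lf_ndvdz (d a b : int) :
  ~~ (d %| a)%Z -> exists m, ~~ (d %| (lf a b).[m])%Z.
Proof.
move=> nda; have [db|ndb] := boolP (d %| b)%Z.
  by exists 1; rewrite lf_horner mulr1 rpredDr.
by exists 0; rewrite lf_horner mulr0 add0r.
Qed.

Lemma dvdz_horner_sub (F : {poly int}) (x y : int) : (x - y %| F.[x] - F.[y])%Z.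
Proof.
have : root (F - (F.[y])%:P) y by rewrite /root !hornerE subrr.
case/factor_theorem => q eqF.
have -> : F.[x] - F.[y] = (F - (F.[y])%:P).[x] by rewrite !hornerE.
by rewrite eqF !hornerE dvdz_mull.
Qed.

Lemma horner_dvdz_congr (d : int) (F : {poly int}) (x y : int) :
  (d %| x - y)%Z -> (d %| F.[x])%Z = (d %| F.[y])%Z.
Proof.
move=> dxy; have dF := dvdz_trans dxy (dvdz_horner_sub F x y).
by rewrite -(subrK F.[y] F.[x]) rpredDl.
Qed.

Lemma coprimez_affine_onto (R t s d : int) :
  coprimez R d -> exists m, (d %| R * m + t - s)%Z.
Proof.
case/coprimezP => [[u v] /= Bez]; exists ((s - t) * u).
have -> : R * ((s - t) * u) + t - s
        = (s - t) * (u * R + v * d - 1) - (s - t) * v * d by ring.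
by rewrite Bez subrr mulr0 sub0r rpredN dvdz_mull.
Qed.

Lemma coprimez_prodr (I : Type) (s : seq I) (P : pred I) (F : I -> int) (m : int) :
  (forall i, P i -> coprimez m (F i)) -> coprimez m (\prod_(i <- s | P i) F i).
Proof.
move=> coF; apply: (big_ind (coprimez m)) => //; first by rewrite /coprimez gcdz1.
by move=> x y cox coy; rewrite coprimezMr cox coy.
Qed.

Lemma prime_coprimez (p : nat) (x : int) :
  prime p -> coprimez p%:Z x = ~~ (p%:Z %| x)%Z.
Proof. by move=> p_pr; rewrite coprimezE dvdzE absz_nat prime_coprime. Qed.

Lemma prime_ndvdz_prod (p : nat) (I : Type) (s : seq I) (P : pred I) (F : I -> int) :
  prime p -> (forall i, P i -> ~~ (p%:Z %| F i)%Z) ->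
  ~~ (p%:Z %| \prod_(i <- s | P i) F i)%Z.
Proof.
move=> p_pr ndF; rewrite -prime_coprimez //.
by apply: coprimez_prodr => i Pi; rewrite prime_coprimez ?ndF.
Qed.

Lemma prime_coprimez_ndvd (p : nat) (x y : int) :
  prime p -> (p%:Z %| x)%Z -> coprimez x y -> ~~ (p%:Z %| y)%Z.
Proof. by move=> p_pr px /(coprimez_dvdl px); rewrite prime_coprimez. Qed.

Lemma linear_congruences_solvable (k : nat) (r a b : 'I_k -> int) :
  (forall i, coprimez (r i) (a i)) ->
  (forall i j, i != j -> coprimez (r i) (r j)) ->
  exists t, forall i, (r i %| a i * t + b i)%Z.
Proof.
move=> cop_ra cop_rr.
pose Q i := \prod_(j < k | j != i) r j.
have r_dvdQ i j : j != i -> (r i %| Q j)%Z.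
  by move=> ji; rewrite /Q (bigD1 i) 1?eq_sym //= dvdz_mulr.
have inv i : exists w, (r i %| a i * Q i * w - 1)%Z.
  have : coprimez (r i) (a i * Q i).
    by rewrite coprimezMr cop_ra; apply: coprimez_prodr => j ji; rewrite cop_rr // eq_sym.
  case/coprimezP => [[u v] /= Bez]; exists v.
  have -> : a i * Q i * v - 1 = - (u * r i) by rewrite -Bez; ring.
  by rewrite rpredN dvdz_mull.
have [w r_dvd_w] := fin_all_exists inv.
(* [w j] inverts [a j * Q j] modulo [r j], while [Q j] vanishes modulo every other [r i]. *)
exists (- \sum_(j < k) b j * Q j * w j) => i.
rewrite (bigD1 i) //= mulrN mulrDr mulr_sumr; set S := \sum_(j < k | j != i) _.
have -> : - (a i * (b i * Q i * w i) + S) + b i = - (b i * (a i * Q i * w i - 1)) - S.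
  by ring.
rewrite rpredB ?rpredN ?dvdz_mull //; apply: rpred_sum => j ji.
by apply/dvdz_mull/dvdz_mulr/dvdz_mull; apply: r_dvdQ.
Qed.

Section Rescaling.

Variables (k : nat) (r a b : 'I_k -> int) (t : int).
Hypothesis r_gt0 : forall i, 0 < r i.
Hypothesis r_coprime : forall i j, i != j -> coprimez (r i) (r j).
Hypothesis r_dvd : forall i, (r i %| a i * t + b i)%Z.

Definition rescaled_lead i := a i * \prod_(j < k | j != i) r j.
Definition rescaled_const i := ((a i * t + b i) %/ r i)%Z.

Local Notation K i := (lf (rescaled_lead i) (rescaled_const i)).
Local Notation R := (\prod_(i < k) r i).

Lemma rescaled_lead_gt0 i : 0 < a i -> 0 < rescaled_lead i.
Proof. by move=> a_gt0; rewrite mulr_gt0 // prodr_gt0. Qed.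

Lemma rescaled_lfE i : r i *: K i = lf (a i) (b i) \Po (R *: 'X + t%:P).
Proof.
have lead : r i * rescaled_lead i = a i * R.
  by rewrite /rescaled_lead [in RHS](bigD1 i) //=; ring.
have const : r i * rescaled_const i = a i * t + b i by rewrite mulrC divzK.
rewrite /lf comp_polyD comp_polyC comp_polyZ comp_polyX.
by rewrite !scalerDr !scalerA !scale_polyC lead const polyCD addrA.
Qed.

Lemma rescaled_horner i m : r i * (K i).[m] = (lf (a i) (b i)).[R * m + t].
Proof. by rewrite -hornerZ rescaled_lfE horner_comp !hornerE. Qed.

Lemma rescaled_relation i j cL cK n :
  lf_relation cL cK n (lf (a i) (b i)) (lf (a j) (b j)) ->
  lf_relation (cL * r i) (cK * r j) n (K i) (K j).
Proof.
move=> rel; apply: lf_relation_unscale => //.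
by rewrite !rescaled_lfE; apply: lf_relation_comp.
Qed.

Lemma rescaled_p_admissible_coprime (p : nat) :
  prime p -> (forall i, ~~ (p%:Z %| r i)%Z) ->
  p_admissible p a b -> p_admissible p rescaled_lead rescaled_const.
Proof.
move=> p_pr p_ndvd_r [s p_ndvd_s].
have cop_Rp : coprimez R p%:Z.
  by rewrite coprimez_sym prime_coprimez // prime_ndvdz_prod.
have [m hit_s] := coprimez_affine_onto t s cop_Rp.
exists m; apply: contra p_ndvd_s => p_dvd.
rewrite -horner_prod -(horner_dvdz_congr _ hit_s) horner_prod.
under eq_bigr do rewrite -rescaled_horner.
by rewrite big_split /= dvdz_mull.
Qed.

Lemma rescaled_p_admissible_dvd (p : nat) i0 :
  prime p -> (p%:Z %| r i0)%Z -> coprimez (r i0) (a i0) ->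
  (forall j, j != i0 -> coprimez (r i0) (lf_det (a i0) (b i0) (a j) (b j))) ->
  p_admissible p rescaled_lead rescaled_const.
Proof.
move=> p_pr p_dvd_r cop_a cop_det.
have p_ndvd_r j : j != i0 -> ~~ (p%:Z %| r j)%Z.
  move=> ji0; apply: prime_coprimez_ndvd p_pr p_dvd_r _.
  by apply: r_coprime; rewrite eq_sym.
have p_ndvd_lead : ~~ (p%:Z %| rescaled_lead i0)%Z.
  rewrite -prime_coprimez // coprimezMr (coprimez_dvdl p_dvd_r cop_a).
  by apply: coprimez_prodr => j ji0; rewrite prime_coprimez ?p_ndvd_r.
have [m p_ndvd_Ki0] := lf_ndvdz (rescaled_const i0) p_ndvd_lead.
exists m; apply: prime_ndvdz_prod => // j _.
have [-> // | ji0] := eqVneq j i0.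
apply: contra (prime_coprimez_ndvd p_pr p_dvd_r (cop_det j ji0)) => p_dvd_Kj.
apply: (@dvdz_lf_det _ _ _ _ _ (R * m + t)); rewrite -rescaled_horner.
  exact: dvdz_mulr.
exact: dvdz_mull.
Qed.

Lemma rescaled_admissible :
  (forall i, coprimez (r i) (a i)) ->
  (forall i j, i != j -> coprimez (r i) (lf_det (a i) (b i) (a j) (b j))) ->
  admissible a b -> admissible rescaled_lead rescaled_const.
Proof.
move=> cop_a cop_det adm p p_pr.
have [/existsP [i0 p_dvd_r] | /existsPn p_ndvd_r] := boolP [exists i, p%:Z %| r i]%Z.
  by apply: (rescaled_p_admissible_dvd p_pr p_dvd_r) => // j ji0; rewrite cop_det // eq_sym.
by apply: rescaled_p_admissible_coprime => //; apply: adm.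
Qed.

End Rescaling.

Theorem theorem2p2 (k : nat) (hk : (1 <= k)%N)
  (a b : 'I_k -> int) (ha : forall i, 0 < a i) (hadm : admissible a b)
  (P : 'I_k -> 'I_k -> bool) (hP : forall i j, P i j -> i != j)
  (c n : 'I_k -> 'I_k -> int)
  (hrel : forall i j, P i j ->
     lf_relation (c i j) (c j i) (n i j) (lf (a i) (b i)) (lf (a j) (b j)))
  (r : 'I_k -> int) (hr : forall i, 0 < r i)
  (hra : forall i, gcdz (r i) (a i) = 1)
  (hrdet : forall i j, i != j -> gcdz (r i) (lf_det (a i) (b i) (a j) (b j)) = 1)
  (hrr : forall i j, i != j -> gcdz (r i) (r j) = 1) :
  exists a' b' : 'I_k -> int,
    (forall i, 0 < a' i) /\ admissible a' b' /\
    (forall i, forall j, P i j ->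
       lf_relation (c i j * r i) (c j i * r j) (n i j)
                   (lf (a' i) (b' i)) (lf (a' j) (b' j))).
Proof.
have cop_a i : coprimez (r i) (a i) by apply/eqP.
have cop_r i j : i != j -> coprimez (r i) (r j) by move/hrr/eqP.
have cop_det i j : i != j -> coprimez (r i) (lf_det (a i) (b i) (a j) (b j)).
  by move/hrdet/eqP.
have [t r_dvd] := linear_congruences_solvable b cop_a cop_r.
exists (rescaled_lead r a), (rescaled_const r a b t); split; [|split].
- by move=> i; apply: rescaled_lead_gt0.
- exact: rescaled_admissible.
- by move=> i j /hrel; apply: rescaled_relation.
Qed.
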